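(* Let $\mathcal X$ be locally convex and let $\rho$ be proper, quasiconvex and lower semicontinuous. Then $\mathcal B$ is nonempty and $$\rho(X)=\sup_{\psi\in\mathcal B}\rho(X|\psi)\quad\text{for all }X\in\mathcal X.$$
   Context: Standing setup: Let $\mathcal{X}$ be a real topological vector space partially ordered by a convex cone $\mathcal{X}_+\subset\mathcal X$; write $X\ge Y$ iff $X-Y\in\mathcal X_+$. Fix $N\in\mathbb N$ and: a set $\mathcal P\subset\mathbb R^N$ with $0\in\mathcal P$; a function $V_0:\mathbb R^N\to\mathbb R$ with $V_0(0)=0$ and $V_0(x)\ge -V_0(-x)$ for all $x\in\mathbb R^N$; a map $V_1:\mathbb R^N\to\mathcal X$ with $V_1(0)=0$ and $V_1(x)\le -V_1(-x)$ for all $x\in\mathbb R^N$; a set $\mathcal A\subset\mathcal X$ with $0\in\mathcal A$ and $\mathcal A+\mathcal X_+\subset\mathcal A$. The risk measure is $\rho:\mathcal X\to[-\infty,\infty]$, $\rho(X)=\inf\{V_0(x): x\in\mathcal P,\ X+V_1(x)\in\mathcal A\}$, with $\inf\emptyset=+\infty$. $\rho$ is proper if it never takes the value $-\infty$ and is not identically $+\infty$; quasiconvex if $\rho(\lambda X+(1-\lambda)Y)\le\max\{\rho(X),\rho(Y)\}$ for $\lambda\in[0,1]$. $\mathcal X'$ is the topological dual of $\mathcal X$. For $\psi\in\mathcal X'$: $\sigma_{\mathcal A}(\psi)=\inf_{X\in\mathcal A}\psi(X)$ and $\mathcal B=\{\psi\in\mathcal X':\sigma_{\mathcal A}(\psi)>-\infty\}$.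 For $X\in\mathcal X$, $\psi\in\mathcal X'$: $\rho(X|\psi)=\inf\{\rho(Y): Y\in\mathcal X,\ \psi(Y)\le\psi(X)\}$. *)

From HB Require Import structures.
From mathcomp Require Import all_boot all_order all_algebra.
From mathcomp Require Import all_classical all_reals all_analysis.
Set Implicit Arguments. Unset Strict Implicit. Unset Printing Implicit Defensive.
Import Order.TTheory GRing.Theory Num.Theory.
Import numFieldNormedType.Exports.
Local Open Scope classical_set_scope.
Local Open Scope ring_scope.

Section Defs.
Context {R : realType} {E : tvsType R}.

Definition convex_cone (C : set E) : Prop :=
  C 0 /\ (forall x y, C x -> C y -> C (x + y)) /\
  (forall (l : R) x, 0 <= l -> C x -> C (l *: x)).

Definition cone_le (C : set E) (X Y : E) : Prop := C (Y - X).

Definition is_dual (psi : E -> R) : Prop :=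
  (forall (a : R) (x y : E), psi (a *: x + y) = a * psi x + psi y) /\
  continuous psi.

Definition rho_of {N : nat} (P : set 'rV[R]_N) (V0 : 'rV[R]_N -> R)
  (V1 : 'rV[R]_N -> E) (A : set E) (X : E) : \bar R :=
  ereal_inf [set (V0 x)%:E | x in [set x | P x /\ A (X + V1 x)]].

Definition sigmaA (A : set E) (psi : E -> R) : \bar R :=
  ereal_inf [set (psi X)%:E | X in A].

Definition barrier_cone (A : set E) : set (E -> R) :=
  [set psi | is_dual psi /\ (-oo < sigmaA A psi)%E].

Definition rho_cond (rho : E -> \bar R) (X : E) (psi : E -> R) : \bar R :=
  ereal_inf [set rho Y | Y in [set Y | psi Y <= psi X]].

Definition proper_fun (rho : E -> \bar R) : Prop :=
  (forall X, rho X != -oo%E) /\ (exists X, rho X != +oo%E).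

Definition quasiconvex (rho : E -> \bar R) : Prop :=
  forall (X Y : E) (l : R), 0 <= l <= 1 ->
    (rho (l *: X + (1 - l) *: Y)%R <= maxe (rho X) (rho Y))%E.

End Defs.

From HB Require Import structures.
From mathcomp Require Import all_boot all_order all_algebra.
From mathcomp Require Import all_classical all_reals all_analysis.
From mathcomp Require Import lra.
Import Order.TTheory GRing.Theory Num.Theory.
Import numFieldNormedType.Exports.
Local Open Scope classical_set_scope.
Local Open Scope ring_scope.
Set Implicit Arguments. Unset Strict Implicit. Unset Printing Implicit Defensive.

(* The bound [rho(X|psi) <= rho(X)] is immediate.  Conversely, let [m < rho(X)].
   If [rho >= m] everywhere, [psi = 0] already gives [rho(X|0) >= m].  Otherwise
   lower semicontinuity and local convexity give a convex neighbourhood [X + U]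
   on which [rho > m], disjoint from the sublevel set [{rho <= m}], which is
   convex by quasiconvexity.  A continuous linear [psi] strictly separating them
   (Hahn-Banach applied to the Minkowski gauge of [l0 - {rho <= m} + U]) makes
   every [Y] with [psi Y <= psi X] satisfy [rho Y > m], i.e. [rho(X|psi) >= m].
   Finally [psi] is in [B]: if [V0 x < m] for some admissible [x], then
   [A - V1 x] lies in [{rho <= m}], so [psi] is bounded below on [A]. *)

Lemma convex_setP (R : numDomainType) (E : lmodType R) (A : set E) :
  convex_set A <->
  forall x y l, 0 <= l <= 1 -> A x -> A y -> A (l *: x + (1 - l) *: y).
Proof.
split=> [cA x y l /andP[l0 l1] Ax Ay|cA x y l].
  by have := cA x y (Itv01 l0 l1) (mem_set Ax) (mem_set Ay); rewrite inE.
rewrite !inE => Ax Ay; apply: cA => //; apply/andP; split; [exact: ge0|exact: le1].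
Qed.

Section HahnBanach.
Variables (R : realType) (E : lmodType R) (p : E -> R).
Hypotheses (p_ge0 : forall x, 0 <= p x)
  (p_add : forall x y, p (x + y) <= p x + p y)
  (p_scale : forall t x, 0 < t -> p (t *: x) = t * p x).
Variable k0 : E.
Hypothesis p_k0 : 1 <= p k0.

Lemma sublinear0 : p 0 = 0.
Proof. by have := p_scale (0 : E) (ltr0Sn _ 1); rewrite scaler0; lra. Qed.

Definition line_graph : set (E * R) := [set (t *: k0, t) | t in [set: R]].

(* A partial extension is encoded by its graph: a linear functional defined on
   a subspace containing [k0], dominated by [p] and mapping [k0] to [1]. *)
Record partial_extension (G : set (E * R)) : Prop := PartialExtension {
  pext_line : line_graph `<=` G;
  pext_functional : forall x a b, G (x, a) -> G (x, b) -> a = b;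
  pext_add : forall x y a b, G (x, a) -> G (y, b) -> G (x + y, a + b);
  pext_scale : forall t x a, G (x, a) -> G (t *: x, t * a);
  pext_dominated : forall x a, G (x, a) -> a <= p x }.

Lemma partial_extension_line : partial_extension line_graph.
Proof.
split=> //.
- move=> x a b [t _ [<- <-]] [s _ [/eqP + <-]].
  rewrite eq_sym -subr_eq0 -scalerBl scaler_eq0 subr_eq0 => /orP[/eqP//|/eqP k00].
  by move: p_k0; rewrite k00 sublinear0; lra.
- by move=> x y a b [t _ [<- <-]] [s _ [<- <-]]; exists (t + s); rewrite ?scalerDl.
- by move=> u x a [t _ [<- <-]]; exists (u * t); rewrite ?scalerA.
- move=> x a [t _ [<- <-]]; have [t0|t0] := leP t 0.
    exact: le_trans (p_ge0 _).
  by rewrite p_scale // ler_peMr // ltW.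
Qed.

Lemma partial_extension00 G : partial_extension G -> G (0, 0).
Proof. by move=> gG; apply: (pext_line gG); exists 0; rewrite ?scale0r. Qed.

Lemma partial_extension_bigcup (F : set (set (E * R))) :
  F !=set0 -> F `<=` partial_extension -> total_on F subset ->
  partial_extension (\bigcup_(G in F) G).
Proof.
move=> [G0 FG0] Fext Ftot.
have common z1 z2 : (\bigcup_(G in F) G) z1 -> (\bigcup_(G in F) G) z2 ->
    exists2 G, F G & G z1 /\ G z2.
  move=> [G1 FG1 G1z] [G2 FG2 G2z].
  have [s12|s21] := Ftot _ _ FG1 FG2.
    by exists G2 => //; split=> //; exact: s12.
  by exists G1 => //; split=> //; exact: s21.
split.
- by move=> z lz; exists G0 => //; exact: pext_line (Fext _ FG0) _ lz.
- move=> x a b h1 h2; have [G FG [Ga Gb]] := common _ _ h1 h2.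
  exact: (pext_functional (Fext _ FG) Ga Gb).
- move=> x y a b h1 h2; have [G FG [Ga Gb]] := common _ _ h1 h2.
  by exists G => //; exact: (pext_add (Fext _ FG) Ga Gb).
- by move=> t x a [G FG Ga]; exists G => //; exact: (pext_scale (Fext _ FG) t Ga).
- by move=> x a [G FG Ga]; exact: (pext_dominated (Fext _ FG) Ga).
Qed.

Lemma partial_extension_bounds G x : partial_extension G ->
  exists c, (forall y b, G (y, b) -> b - p (y - x) <= c) /\
            (forall z d, G (z, d) -> c <= p (z + x) - d).
Proof.
move=> gG; pose S := [set r | exists y b, G (y, b) /\ r = b - p (y - x)].
have ub y b z d : G (y, b) -> G (z, d) -> b - p (y - x) <= p (z + x) - d.
  move=> Gy Gz; have := pext_dominated gG (pext_add gG Gy Gz).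
  by have := p_add (y - x) (z + x); rewrite addrACA addNr addr0; lra.
have G00 := partial_extension00 gG.
have S0 : S !=set0 by exists (0 - p (0 - x)), 0, 0.
exists (sup S); split=> [y b Gy|z d Gz].
  apply: sup_upper_bound; last by exists y, b.
  by split=> //; exists (p (0 + x) - 0) => _ [y' [b' [Gb' ->]]]; exact: ub Gb' G00.
by apply: ge_sup => // _ [y' [b' [Gb' ->]]]; exact: ub Gb' Gz.
Qed.

Definition line_extension (G : set (E * R)) (x : E) (c : R) : set (E * R) :=
  [set z | exists y b t, G (y, b) /\ z = (y + t *: x, b + t * c)].

Lemma sub_line_extension G x c : G `<=` line_extension G x c.
Proof.
move=> z Gz; exists z.1, z.2, 0.
by rewrite scale0r mul0r !addr0 -surjective_pairing.
Qed.

Section LineExtension.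
Variables (G : set (E * R)) (x : E) (c : R).
Hypotheses (gG : partial_extension G)
  (c_ge : forall y b, G (y, b) -> b - p (y - x) <= c)
  (c_le : forall z d, G (z, d) -> c <= p (z + x) - d).

Lemma line_extension_dominated y b t : G (y, b) -> b + t * c <= p (y + t *: x).
Proof.
move=> Gy; have [t0|t0|->] := ltgtP t 0; last first.
- by rewrite mul0r scale0r !addr0; exact: (pext_dominated gG Gy).
- have := c_le (pext_scale gG t^-1 Gy).
  have -> : y + t *: x = t *: (t^-1 *: y + x).
    by rewrite scalerDr scalerA mulfV ?gt_eqF // scale1r.
  rewrite p_scale // => le_c.
  have := ler_wpM2l (ltW t0) le_c.
  by rewrite mulrBr mulrA mulfV ?gt_eqF // mul1r; lra.
- have s0 : 0 < - t by rewrite oppr_gt0.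
  have := c_ge (pext_scale gG (- t)^-1 Gy).
  have -> : y + t *: x = (- t) *: ((- t)^-1 *: y - x).
    by rewrite scalerBr scalerA mulfV ?gt_eqF // scale1r scaleNr opprK.
  rewrite p_scale // => ge_c.
  have := ler_wpM2l (ltW s0) ge_c.
  by rewrite mulrBr mulrA mulfV ?gt_eqF // mul1r; lra.
Qed.

Lemma partial_extension_line_extension :
  (forall a, ~ G (x, a)) -> partial_extension (line_extension G x c).
Proof.
move=> xG; split.
- by move=> z /(pext_line gG); exact: sub_line_extension.
- move=> z a a' [y [b [t [Gy [-> ->]]]]] [y' [b' [t' [Gy' [e ->]]]]].
  have [tt'|tt'] := eqVneq t t'.
    subst t'; move/addIr: e => e; subst y'.
    by rewrite (pext_functional gG Gy Gy').
  exfalso; apply: (xG ((t - t')^-1 * (b' - b))).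
  have dy : y' - y = (t - t') *: x.
    have -> : y' = y + t *: x - t' *: x by rewrite e addrK.
    by rewrite addrAC [y + _]addrC addrK -scalerBl.
  have := pext_scale gG (t - t')^-1 (pext_add gG Gy' (pext_scale gG (-1) Gy)).
  by rewrite scaleN1r mulN1r dy scalerA mulVf ?scale1r // subr_eq0.
- move=> z z' a a' [y [b [t [Gy [-> ->]]]]] [y' [b' [t' [Gy' [-> ->]]]]].
  exists (y + y'), (b + b'), (t + t'); split; first exact: (pext_add gG Gy Gy').
  by congr pair; [rewrite scalerDl | rewrite mulrDl]; rewrite addrACA.
- move=> s z a [y [b [t [Gy [-> ->]]]]].
  exists (s *: y), (s * b), (s * t); split; first exact: (pext_scale gG s Gy).
  by rewrite scalerDr scalerA mulrDr mulrA.
- by move=> z a [y [b [t [Gy [-> ->]]]]]; exact: line_extension_dominated.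
Qed.

End LineExtension.

Lemma maximal_partial_extension_total G : partial_extension G ->
  (forall H, partial_extension H -> G `<=` H -> H `<=` G) ->
  forall x, exists a, G (x, a).
Proof.
move=> gG Gmax x; apply/not_existsP => xG.
have [c [c_ge c_le]] := partial_extension_bounds x gG.
apply: (xG c); apply: (Gmax _ (partial_extension_line_extension gG c_ge c_le xG)).
  exact: sub_line_extension.
exists 0, 0, 1; rewrite add0r scale1r mul1r add0r.
by split; first exact: partial_extension00.
Qed.

Theorem hahn_banach : exists f : E -> R,
  [/\ forall a x y, f (a *: x + y) = a * f x + f y,
      forall x, f x <= p x & f k0 = 1].
Proof.
pose ext := {G : set (E * R) | partial_extension G}.
pose le_ext (G H : ext) := `[< sval G `<=` sval H >].
have chain_ub (A : set ext) : total_on A le_ext ->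
    exists H, forall G, A G -> le_ext G H.
  move=> Atot; pose F := line_graph |` [set sval G | G in A].
  have Fext : F `<=` partial_extension.
    by move=> _ [->|[G _ <-]]; [exact: partial_extension_line|exact: svalP].
  have Ftot : total_on F subset.
    move=> _ _ [->|[G1 AG1 <-]] [->|[G2 AG2 <-]].
    - by left.
    - by left; exact: pext_line (svalP G2).
    - by right; exact: pext_line (svalP G1).
    - by have [/asboolP|/asboolP] := Atot _ _ AG1 AG2; [left|right].
  have F0 : F !=set0 by exists line_graph; left.
  have Fbig := partial_extension_bigcup F0 Fext Ftot.
  exists (exist _ _ Fbig) => G AG; apply/asboolP => z Gz.
  by exists (sval G) => //; right; exists G.
have le_ext_refl G : le_ext G G by apply/asboolP.
have le_ext_trans G H K : le_ext G H -> le_ext H K -> le_ext G K.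
  by move=> /asboolP GH /asboolP HK; apply/asboolP; exact: subset_trans HK.
have [[G gG] Gmax] := ZL_preorder (exist _ line_graph partial_extension_line)
  le_ext_refl le_ext_trans chain_ub.
have Gtot := maximal_partial_extension_total gG
  (fun H hH GH => asboolW (Gmax (exist _ H hH) (asboolT GH))).
pose f x := sval (cid (Gtot x)).
have Gf x : G (x, f x) := svalP (cid (Gtot x)).
exists f; split=> [a x y|x|].
- apply: (pext_functional gG (Gf _)).
  exact: (pext_add gG (pext_scale gG a (Gf x)) (Gf y)).
- exact: (pext_dominated gG (Gf x)).
- apply: (pext_functional gG (Gf _)); apply: (pext_line gG).
  by exists 1; rewrite ?scale1r.
Qed.

End HahnBanach.

Definition gauge (R : realType) (E : lmodType R) (V : set E) (v : E) : R :=
  inf [set t | 0 < t /\ V (t^-1 *: v)].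

Section Gauge.
Variables (R : realType) (E : lmodType R) (V : set E).
Hypotheses (V_convex : convex_set V)
  (V_absorbing : forall v, exists2 s, 0 < s & V (s *: v)).

Let gauge_set_neq0 v : [set t | 0 < t /\ V (t^-1 *: v)] !=set0.
Proof.
have [s s0 Vs] := V_absorbing v.
by exists s^-1; split; rewrite ?invr_gt0 ?invrK.
Qed.

Let gauge_set_lbound v : has_lbound [set t | 0 < t /\ V (t^-1 *: v)].
Proof. by exists 0 => t [t0 _]; exact: ltW. Qed.

Lemma gauge_ge0 v : 0 <= gauge V v.
Proof. by apply: lb_le_inf => // t [t0 _]; exact: ltW. Qed.

Lemma gauge_le v t : 0 < t -> V (t^-1 *: v) -> gauge V v <= t.
Proof. by move=> t0 Vt; apply: ge_inf => //; split. Qed.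

Lemma gauge_lt v e : gauge V v < e -> exists2 t, 0 < t /\ V (t^-1 *: v) & t < e.
Proof. exact: inf_lt. Qed.

Lemma gauge_add x y : gauge V (x + y) <= gauge V x + gauge V y.
Proof.
have /convex_setP cV := V_convex.
apply/ler_addgt0Pr => e e0; have e20 : 0 < e / 2 by rewrite divr_gt0.
have [s [s0 Vs] lt_s] := @gauge_lt x (gauge V x + e / 2) ltac:(by rewrite ltrDl).
have [t [t0 Vt] lt_t] := @gauge_lt y (gauge V y + e / 2) ltac:(by rewrite ltrDl).
have st0 : 0 < s + t by rewrite addr_gt0.
suff : gauge V (x + y) <= s + t by lra.
apply: gauge_le => //.
have -> : (s + t)^-1 *: (x + y) =
    (s / (s + t)) *: (s^-1 *: x) + (1 - s / (s + t)) *: (t^-1 *: y).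
  have -> : 1 - s / (s + t) = t / (s + t).
    apply: (mulIf (lt0r_neq0 st0)).
    by rewrite mulrBl mul1r !mulfVK ?lt0r_neq0 // addrC addKr.
  rewrite !scalerA [s / _ * _]mulrAC [t / _ * _]mulrAC !mulfV ?lt0r_neq0 //.
  by rewrite !mul1r scalerDr.
apply: cV => //; apply/andP; split; first by rewrite divr_ge0 // ltW.
by rewrite ler_pdivrMr // mul1r; lra.
Qed.

Let gauge_scale_le r v : 0 < r -> gauge V (r *: v) <= r * gauge V v.
Proof.
move=> r0; apply/ler_addgt0Pr => e e0.
have [t [t0 Vt] lt_t] :=
  @gauge_lt v (gauge V v + e / r) ltac:(by rewrite ltrDl divr_gt0).
have : r * t <= r * gauge V v + e.
  have := ler_wpM2l (ltW r0) (ltW lt_t).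
  by rewrite mulrDr mulrCA divff ?gt_eqF // mulr1.
suff : gauge V (r *: v) <= r * t by lra.
apply: gauge_le; first exact: mulr_gt0.
by rewrite scalerA invfM mulrAC mulVf ?gt_eqF // mul1r.
Qed.

Lemma gauge_scale r v : 0 < r -> gauge V (r *: v) = r * gauge V v.
Proof.
move=> r0; apply/eqP; rewrite eq_le gauge_scale_le //=.
have ri0 : 0 < r^-1 by rewrite invr_gt0.
have := @gauge_scale_le r^-1 (r *: v) ri0.
rewrite scalerA mulVf ?gt_eqF // scale1r => le_rv.
by rewrite -(ler_pM2l ri0) mulrA mulVf ?gt_eqF // mul1r.
Qed.

End Gauge.

Lemma convex_set_sub_add (R : numDomainType) (E : lmodType R)
    (L U : set E) (l0 : E) :
  convex_set L -> convex_set U -> convex_set [set l0 - l + u | l in L & u in U].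
Proof.
move=> /convex_setP cL /convex_setP cU; apply/convex_setP.
move=> _ _ l l01 [l1 L1 [u1 U1 <-]] [l2 L2 [u2 U2 <-]].
exists (l *: l1 + (1 - l) *: l2); first exact: cL.
exists (l *: u1 + (1 - l) *: u2); first exact: cU.
symmetry; rewrite scalerDr [(1 - l) *: _ ]scalerDr addrACA; congr (_ + _).
by rewrite !scalerBr addrACA -scalerDl [l + _]addrC subrK scale1r opprD.
Qed.

Section LinearForm.
Variables (R : pzRingType) (E : lmodType R) (f : E -> R).
Hypothesis f_lin : forall a x y, f (a *: x + y) = a * f x + f y.

Lemma lin_formD x y : f (x + y) = f x + f y.
Proof. by rewrite -[x]scale1r f_lin mul1r scale1r. Qed.

Lemma lin_form0 : f 0 = 0.
Proof. by apply: (@addIr _ (f 0)); rewrite -lin_formD !addr0 add0r. Qed.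

Lemma lin_formZ a x : f (a *: x) = a * f x.
Proof. by rewrite -[a *: x]addr0 f_lin lin_form0 addr0. Qed.

Lemma lin_formN x : f (- x) = - f x.
Proof. by rewrite -scaleN1r lin_formZ mulN1r. Qed.

End LinearForm.

Section Separation.
Variables (R : realType) (E : tvsType R).

Lemma nbhs0_absorbing (U : set E) : nbhs 0 U ->
  forall v : E, exists2 s : R, 0 < s & U (s *: v).
Proof.
move=> nU v; have /= := scale_continuous ((0 : R^o), v) U.
rewrite scale0r => /(_ nU) [[B1 B2] /= [nB1 nB2] BU].
have [d hd] := nbhs_ex nB1.
have d0 : 0 < d%:num by [].
exists (d%:num / 2); first by rewrite divr_gt0.
apply: (BU (d%:num / 2, v)); split => /=; last exact: nbhs_singleton.
by apply: hd; rewrite /ball /= sub0r normrN gtr0_norm ?divr_gt0 //; lra.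
Qed.

Lemma lin_form_continuous (f : E -> R) (U : set E) :
  (forall a x y, f (a *: x + y) = a * f x + f y) -> nbhs 0 U ->
  (forall u, U u -> f u <= 1) -> continuous f.
Proof.
move=> f_lin nU fU x; apply/cvgrPdist_lt => e e0.
have nW : nbhs 0 (U `&` [set w | U (- w)]).
  apply: filterI => //; apply: filterS (nbhs0N nU) => w [y Uy <-].
  by rewrite /= opprK.
have e2n : e / 2 != 0 by rewrite gt_eqF // divr_gt0.
apply: filterS (nbhsT x (nbhs0Z e2n nW)) => y [z [w [Uw Unw] <-] <-].
have := fU _ Uw; have := fU _ Unw.
rewrite (lin_formD f_lin) (lin_formZ f_lin) (lin_formN f_lin) => h1 h2.
rewrite opprD addrA subrr add0r normrN ltr_norml; apply/andP; split; nra.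
Qed.

Lemma convex_separation (L U : set E) (X : E) :
  convex_set L -> convex_set U -> nbhs 0 U ->
  (forall u, U u -> ~ L (X + u)) -> L !=set0 ->
  exists psi : E -> R, is_dual psi /\ forall Y, L Y -> psi X < psi Y.
Proof.
move=> cL cU nU XUL [l0 Ll0].
pose V := [set l0 - l + u | l in L & u in U].
have UV : U `<=` V by move=> u Uu; exists l0 => //; exists u; rewrite // subrr add0r.
have U_absorbing := nbhs0_absorbing nU.
have V_absorbing v : exists2 s : R, 0 < s & V (s *: v).
  by have [s s0 Us] := U_absorbing v; exists s => //; exact: UV.
have cV : convex_set V by exact: convex_set_sub_add.
pose k0 := l0 - X.
(* Otherwise [X + t u] would be a convex combination of [l] and [l0] in [L]. *)
have gauge_k0 : 1 <= gauge V k0.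
  rewrite leNgt; apply/negP.
  move=> /(gauge_lt V_absorbing) [t [t0 [l Ll [u Uu e]]] t1].
  have /convex_setP cU' := cU; have /convex_setP cL' := cL.
  have t01 : 0 <= t <= 1 by rewrite ltW //= ltW.
  apply: (XUL (t *: u)).
    rewrite -[t *: u]addr0 -(scaler0 _ (1 - t)).
    by apply: cU' => //; exact: nbhs_singleton.
  have -> : X + t *: u = t *: l + (1 - t) *: l0.
    have -> : X = l0 - t *: (l0 - l + u).
      by rewrite e scalerA mulfV ?gt_eqF // scale1r opprB addrC subrK.
    rewrite scalerBl scale1r !scalerDr scalerN opprD opprD opprK.
    by rewrite -!addrA addNr addr0 [- _ + _]addrC addrCA.
  exact: cL'.
have [f [f_lin f_le f_k0]] := hahn_banach (gauge_ge0 V_absorbing)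
  (gauge_add cV V_absorbing) (gauge_scale V_absorbing) gauge_k0.
have fU u : U u -> f u <= 1.
  move=> Uu; apply: le_trans (f_le u) _.
  by apply: gauge_le; rewrite ?invr1 ?scale1r //; exact: UV.
exists f; split; first by split=> //; exact: lin_form_continuous f_lin nU fU.
move=> Y LY; have [s s0 Us] := U_absorbing k0.
have : f (l0 - Y + s *: k0) <= 1.
  apply: le_trans (f_le _) _; apply: gauge_le; rewrite ?invr1 ?scale1r //.
  by exists Y => //; exists (s *: k0).
have : f l0 - f X = 1 by rewrite -f_k0 (lin_formD f_lin) (lin_formN f_lin).
by rewrite !(lin_formD f_lin) !(lin_formN f_lin) (lin_formZ f_lin) f_k0; lra.
Qed.

End Separation.

Section QuasiconvexDual.
Variables (R : realType) (E : tvsType R) (rho : E -> \bar R).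
Hypotheses (rho_qc : quasiconvex rho) (rho_lsc : lower_semicontinuous rho).

Lemma quasiconvex_sublevel (m : \bar R) : convex_set [set Z | (rho Z <= m)%E].
Proof.
apply/convex_setP => Y Z l l01 Ym Zm /=.
by apply: le_trans (rho_qc Y Z l01) _; rewrite ge_max Ym Zm.
Qed.

Lemma lsc_quasiconvex_separation X (m : R) :
  (m%:E < rho X)%E -> [set Z | (rho Z <= m%:E)%E] !=set0 ->
  exists psi : E -> R,
    is_dual psi /\ forall Y, (rho Y <= m%:E)%E -> psi X < psi Y.
Proof.
move=> mX Lm.
have [W nW rhoW] := rho_lsc mX.
have [B B_convex [B_open B_basis]] := @locally_convex R E.
have [b [Bb bX] bW] := B_basis X W nW.
pose U := [set u | b (X + u)].
have nU : nbhs 0 U.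
  have nb : nbhs X b by apply: open_nbhs_nbhs; split=> //; exact: B_open.
  have := nbhsB (- X) nb; rewrite addNr; apply: filterS => _ [z bz <-].
  by rewrite /U /= addrA subrr add0r.
have cU : convex_set U.
  have /convex_setP cb := B_convex b (mem_set Bb).
  apply/convex_setP => u1 u2 l l01 U1 U2; rewrite /U /=.
  have -> : X + (l *: u1 + (1 - l) *: u2) = l *: (X + u1) + (1 - l) *: (X + u2).
    by rewrite !scalerDr addrACA -scalerDl [l + _]addrC subrK scale1r.
  exact: cb.
apply: (convex_separation (@quasiconvex_sublevel m%:E) cU nU _ Lm).
by move=> u Uu /=; rewrite leNgt rhoW //; exact: bW.
Qed.

End QuasiconvexDual.

Lemma lee_of_lt_fin (R : realType) (x y : \bar R) :
  (forall m : R, (m%:E < x)%E -> (m%:E <= y)%E) -> (x <= y)%E.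
Proof.
case: x => [r| |] h; last exact: leNye.
- case: y h => [s| |] h; last 2 first.
  + exact: leey.
  + by have := h (r - 1)%R; rewrite lte_fin => /(_ ltac:(lra)).
  rewrite lee_fin; apply/ler_addgt0Pr => e e0.
  by have := h (r - e)%R; rewrite lte_fin lee_fin => /(_ ltac:(lra)); lra.
- case: y h => [s| |] h; last 2 first.
  + exact: leey.
  + by have := h 0; rewrite ltry => /(_ isT).
  by have := h (s + 1)%R; rewrite ltry lee_fin => /(_ isT) ?; exfalso; lra.
Qed.

Section ConditionalRisk.
Variables (R : realType) (E : tvsType R).

Lemma barrier_cone0 (A : set E) : barrier_cone A (fun _ => 0).
Proof.
split; first by split; [move=> a x y; rewrite mulr0 addr0|exact: cst_continuous].
apply: (lt_le_trans (ltNyr 0)); rewrite /sigmaA.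
by apply: le_ereal_inf_tmp => _ [Z _ <-].
Qed.

Lemma rho_cond_le (rho : E -> \bar R) X psi : (rho_cond rho X psi <= rho X)%E.
Proof. by rewrite /rho_cond; apply: ereal_inf_lbound; exists X => /=. Qed.

Lemma rho_cond_ge_lbound (rho : E -> \bar R) X psi (m : \bar R) :
  (forall Y, (m <= rho Y)%E) -> (m <= rho_cond rho X psi)%E.
Proof. by move=> m_le; apply: le_ereal_inf_tmp => _ [Y _ <-]. Qed.

Lemma rho_cond_ge (rho : E -> \bar R) X psi (m : R) :
  (forall Y, (rho Y <= m%:E)%E -> psi X < psi Y) -> (m%:E <= rho_cond rho X psi)%E.
Proof.
move=> psi_sep; rewrite /rho_cond; apply: le_ereal_inf_tmp => _ [Y /= psiY <-].
by rewrite leNgt; apply/negP => /ltW /psi_sep; rewrite ltNge psiY.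
Qed.

Variables (N : nat) (P : set 'rV[R]_N) (V0 : 'rV[R]_N -> R) (V1 : 'rV[R]_N -> E)
  (A : set E).

Lemma rho_of_sub_le x Z :
  P x -> A Z -> (rho_of P V0 V1 A (Z - V1 x)%R <= (V0 x)%:E)%E.
Proof.
by move=> Px AZ; apply: ereal_inf_lbound; exists x => //; split; rewrite ?subrK.
Qed.

Lemma barrier_cone_of_separating psi X x (m : R) :
  is_dual psi -> P x -> V0 x <= m ->
  (forall Y, (rho_of P V0 V1 A Y <= m%:E)%E -> psi X < psi Y) ->
  barrier_cone A psi.
Proof.
move=> [psi_lin psi_cont] Px V0m psi_sep; split=> //.
apply: (lt_le_trans (ltNyr (psi X + psi (V1 x)))); rewrite /sigmaA.
apply: le_ereal_inf_tmp => _ [Z AZ <-]; rewrite lee_fin.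
have V0mE : ((V0 x)%:E <= m%:E)%E by rewrite lee_fin.
have := psi_sep _ (le_trans (rho_of_sub_le Px AZ) V0mE).
by rewrite (lin_formD psi_lin) (lin_formN psi_lin); lra.
Qed.

End ConditionalRisk.

Unset Implicit Arguments.
Theorem mainTheorem19 (R : realType) (E : tvsType R) (Xplus : set E)
  (N : nat) (P : set 'rV[R]_N) (V0 : 'rV[R]_N -> R) (V1 : 'rV[R]_N -> E)
  (A : set E) :
  convex_cone Xplus ->
  P 0 ->
  V0 0 = 0 ->
  (forall x, - V0 (- x) <= V0 x) ->
  V1 0 = 0 ->
  (forall x, cone_le Xplus (V1 x) (- V1 (- x))) ->
  A 0 ->
  (forall X Z, A X -> Xplus Z -> A (X + Z)) ->
  proper_fun (rho_of P V0 V1 A) ->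
  quasiconvex (rho_of P V0 V1 A) ->
  lower_semicontinuous (rho_of P V0 V1 A) ->
  (exists psi, barrier_cone A psi) /\
  (forall X : E, rho_of P V0 V1 A X =
     ereal_sup [set rho_cond (rho_of P V0 V1 A) X psi | psi in barrier_cone A]).
Proof.
move=> _ _ _ _ _ _ _ _ _ rho_qc rho_lsc; set rho := rho_of P V0 V1 A.
split; first by exists (fun _ => 0); exact: barrier_cone0.
move=> X; apply/eqP; rewrite eq_le; apply/andP; split; last first.
  by apply: ge_ereal_sup => _ [psi _ <-]; exact: rho_cond_le.
apply: lee_of_lt_fin => m mX.
have [[Y rhoY]|noY] := pselect (exists Y, (rho Y < m%:E)%E); last first.
  apply: ereal_sup_ge; exists (rho_cond rho X (fun _ => 0)).
    by exists (fun _ => 0) => //; exact: barrier_cone0.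
  apply: rho_cond_ge_lbound => Y.
  by rewrite leNgt; apply/negP => rhoY; apply: noY; exists Y.
have [_ [x [Px AYx] <-] V0m] := ereal_inf_lt rhoY; rewrite lte_fin in V0m.
have [psi [psi_dual psi_sep]] :=
  lsc_quasiconvex_separation rho_qc rho_lsc mX (ex_intro _ Y (ltW rhoY)).
apply: ereal_sup_ge; exists (rho_cond rho X psi); last exact: rho_cond_ge psi_sep.
exists psi => //.
exact: barrier_cone_of_separating psi_dual Px (ltW V0m) psi_sep.
Qed.
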